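(* Let $\mathcal{C}$ be a full reflective subcategory of $\mathsf{Top}$ that is contained in the category $\mathsf{Haus}$ of Hausdorff spaces and contains the category $\mathsf{Tych}$ of Tychonoff spaces. Then the empty space is the only object of $\mathcal{C}$ that is finitely generated with respect to embeddings.
   Context: An embedding is an injective continuous map $m:X\to Y$ such that every open set of $X$ has the form $m^{-1}(U)$ for $U$ open in $Y$. An object $X$ of $\mathcal{C}$ is finitely generated w.r.t. embeddings if for every directed diagram $(Z_i)_{i\in I}$ in $\mathcal{C}$ (indexed by a directed poset, i.e. every finite subset has an upper bound) whose connecting morphisms $z_{i,j}$ are embeddings, with colimit cocone $c_i:Z_i\to Z$ in $\mathcal{C}$, every morphism $f:X\to Z$ factorizes as $f=c_i\cdot g$ for some $i$ and $g:X\to Z_i$, and if also $f=c_i\cdot g'$ then $z_{i,j}\cdot g=z_{i,j}\cdot g'$ for some connecting morphism $z_{i,j}$. *)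

From HB Require Import structures.
From mathcomp Require Import all_boot all_order all_algebra.
From mathcomp Require Import all_classical all_reals topology.
From mathcomp Require Import Rstruct Rstruct_topology.

Set Implicit Arguments.
Unset Strict Implicit.
Unset Printing Implicit Defensive.

Local Open Scope classical_set_scope.

Definition embedding (X Y : topologicalType) (m : X -> Y) : Prop :=
  injective m /\ continuous m /\
  forall U : set X, open U -> exists V : set Y, open V /\ U = m @^-1` V.

Definition tychonoff_space (X : topologicalType) : Prop :=
  accessible_space X /\
  forall (x : X) (B : set X), closed B -> ~ B x ->
    exists f : X -> Rdefinitions.R, continuous f /\ f x = 0%R /\
      (forall b, B b -> f b = 1%R).

(* A full subcategory of Top is given by a predicate on spaces
   (morphisms: all continuous maps).  Reflectivity: every space has a
   reflection into C. *)
Definition reflective (C : topologicalType -> Prop) : Prop :=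
  forall X : topologicalType, exists (RX : topologicalType) (eta : X -> RX),
    [/\ C RX, continuous eta &
      forall Y : topologicalType, C Y -> forall f : X -> Y, continuous f ->
        exists! g : RX -> Y, continuous g /\ g \o eta = f].

Definition directed_poset (I : Type) (le : I -> I -> Prop) : Prop :=
  [/\ (forall i, le i i),
      (forall i j k, le i j -> le j k -> le i k),
      (forall i j, le i j -> le j i -> i = j) &
      (forall s : list I, exists j, forall i, List.In i s -> le i j)].

Definition embedding_diagram (C : topologicalType -> Prop)
    (I : Type) (le : I -> I -> Prop)
    (Z : I -> topologicalType) (z : forall i j, Z i -> Z j) : Prop :=
  [/\ directed_poset le,
      (forall i, C (Z i)),
      (forall i j, le i j -> embedding (z i j)),
      (forall i, z i i = (fun x => x)) &
      (forall i j k, le i j -> le j k -> z j k \o z i j = z i k)].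

Definition is_colimit (C : topologicalType -> Prop)
    (I : Type) (le : I -> I -> Prop)
    (Z : I -> topologicalType) (z : forall i j, Z i -> Z j)
    (L : topologicalType) (c : forall i, Z i -> L) : Prop :=
  [/\ C L,
      (forall i, continuous (c i)),
      (forall i j, le i j -> c j \o z i j = c i) &
      (forall Y : topologicalType, C Y -> forall d : forall i, Z i -> Y,
         (forall i, continuous (d i)) ->
         (forall i j, le i j -> d j \o z i j = d i) ->
         exists! u : L -> Y, continuous u /\ forall i, u \o c i = d i)].

Definition fg_wrt_embeddings (C : topologicalType -> Prop)
    (X : topologicalType) : Prop :=
  forall (I : Type) (le : I -> I -> Prop)
    (Z : I -> topologicalType) (z : forall i j, Z i -> Z j)
    (L : topologicalType) (c : forall i, Z i -> L),
  embedding_diagram C le z -> is_colimit C le z c ->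
  forall f : X -> L, continuous f ->
    (exists i (g : X -> Z i), continuous g /\ f = c i \o g) /\
    (forall i (g g' : X -> Z i), continuous g -> continuous g' ->
       f = c i \o g -> f = c i \o g' ->
       exists j, le i j /\ z i j \o g = z i j \o g').

(* The obstruction lives on the grid N x N with two extra points: a, whose
   neighbourhoods contain a cofinite part of every column, and b, whose
   neighbourhoods eventually contain the graph {(n, g n)} of every
   g : nat -> nat.  Every column-cofinite set meets every graph-eventual set,
   so a and b cannot be separated; but removing a corner
   {(i, j) | N <= i, g i < j} separates them, and these subspaces Z_(N,g) are
   zero-dimensional T1, hence Tychonoff.  They form a directed diagram of
   embeddings whose union is the whole space.  As C consists of Hausdorff
   spaces, every cocone in C identifies a with b, so the colimit in C is the
   (Tychonoff) space obtained by gluing a to b.  For nonempty X, the constant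
   map to the glued point factors through Z_0 both via a and via b, and the
   two factorisations are never identified since the connecting maps are
   injective. *)

From HB Require Import structures.
From mathcomp Require Import all_boot all_order all_algebra.
From mathcomp Require Import all_classical all_reals topology.
From mathcomp Require Import Rstruct Rstruct_topology.

Local Open Scope classical_set_scope.

Definition clopen_nbhd_base (X : topologicalType) : Prop :=
  forall (x : X) (U : set X), open U -> U x ->
    exists K : set X, [/\ clopen K, K x & K `<=` U].

Lemma closed_set1_accessible (X : topologicalType) :
  (forall x : X, closed [set x]) -> accessible_space X.
Proof.
move=> cl1 x y xy; exists (~` [set y]); rewrite !inE /=.
by split; [rewrite openC; exact: cl1 | exact/eqP | ].
Qed.

Lemma tychonoff_clopen_base (X : topologicalType) :
  accessible_space X -> clopen_nbhd_base X -> tychonoff_space X.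
Proof.
move=> T1 base; split => // x B cB Bx.
have [K [[oK cK] Kx KB]] := base x (~` B) (closed_openC cB) Bx.
exists (fun y => if `[< K y >] then 0%R else 1%R); split; last split.
- move=> y; have [Ky|Ky] := pselect (K y).
    apply: (near_cst_continuous (0%R : Rdefinitions.R)).
    apply: filterS (open_nbhs_nbhs (conj oK Ky)).
    by move=> t Kt /=; rewrite asboolT.
  apply: (near_cst_continuous (1%R : Rdefinitions.R)).
  apply: filterS (open_nbhs_nbhs (conj (closed_openC cK) Ky)).
  by move=> t Kt /=; rewrite asboolF.
- by rewrite asboolT.
- by move=> b Bb; rewrite asboolF // => /KB; apply.
Qed.

Lemma set_type_accessible (X : topologicalType) (S : set X) :
  accessible_space X -> accessible_space (set_type S).
Proof.
move=> T1 x y xy.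
have /T1 [V [oV Vx Vy]] : set_val x != set_val y.
  by apply: contra_neq xy => /val_inj.
by exists (set_val @^-1` V); split => //; exists V.
Qed.

Lemma clopen_set_type (X : topologicalType) (S K : set X) :
  open K -> open (~` K `|` ~` S) -> clopen (set_val @^-1` K : set (set_type S)).
Proof.
move=> oK oKS; split; first by exists K.
rewrite -openC; exists (~` K `|` ~` S) => //.
apply/seteqP; split=> y /=; last by left.
by case=> // /(_ (set_valP y)).
Qed.

Lemma embedding_set_type (X : topologicalType) (A B : set X)
    (m : set_type A -> set_type B) :
  (forall x, set_val (m x) = set_val x) -> embedding m.
Proof.
move=> mE; split; [|split].
- by move=> x y /(congr1 set_val); rewrite !mE => /val_inj.
- apply/continuousP => _ [V oV <-]; exists V => //.
  by apply/seteqP; split => x /=; rewrite mE.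
- move=> _ [V oV <-]; exists (set_val @^-1` V); split; first by exists V.
  by apply/seteqP; split => x /=; rewrite mE.
Qed.

Lemma empty_tychonoff (X : topologicalType) :
  ~ inhabited X -> tychonoff_space X.
Proof. by move=> X0; split => x; case: X0; exists. Qed.

Definition filter_meet {I T : Type} (F : I -> set_system T) : set_system T :=
  fun U => forall i, F i U.

Instance filter_meet_filter {I T : Type} (F : I -> set_system T)
    {FF : forall i, Filter (F i)} : Filter (filter_meet F).
Proof.
split.
- by move=> i; exact: filterT.
- by move=> U V FU FV i; exact: filterI.
- by move=> U V UV FU i; exact: filterS (FU i).
Qed.

Definition meet_filter_on {I T : Type} (F : I -> filter_on T) : filter_on T :=
  FilterType (filter_meet F) _.

Definition free_filter {T : Type} (F : set_system T) : Prop :=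
  forall t : T, F (~` [set t]).

Definition adjoin {I D : Type} (F : I -> filter_on D) : Type := (I + D)%type.

Section adjoin_topology.
Context {I D : choiceType} {F : I -> filter_on D}.

Definition adjoin_open (U : set (adjoin F)) : Prop :=
  forall i, U (inl i) -> \forall d \near F i, U (inr d).

Lemma adjoin_openT : adjoin_open setT.
Proof. by move=> i _; exact: filterT. Qed.

Lemma adjoin_openI : setI_closed adjoin_open.
Proof. by move=> U V oU oV i [/oU FU /oV FV]; exact: filterI. Qed.

Lemma adjoin_open_bigcup (J : Type) (U : J -> set (adjoin F)) :
  (forall j, adjoin_open (U j)) -> adjoin_open (\bigcup_j U j).
Proof.
move=> oU i [j _ /(oU j) FUj]; apply: filterS FUj => d Ud.
by exists j.
Qed.

End adjoin_topology.

HB.instance Definition _ (I D : choiceType) (F : I -> filter_on D) :=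
  Choice.on (adjoin F).
HB.instance Definition _ (I D : choiceType) (F : I -> filter_on D) :=
  isOpenTopological.Build (adjoin F)
    (@adjoin_openT I D F) (@adjoin_openI I D F) (@adjoin_open_bigcup I D F).

Definition adjoin1 {D : Type} (G : filter_on D) := adjoin (fun _ : unit => G).

Section adjoin_theory.
Context {I D : choiceType} {F : I -> filter_on D}.

Lemma adjoin_openP (U : set (adjoin F)) : open U <-> adjoin_open U.
Proof. by []. Qed.

Hypothesis F_free : forall i, free_filter (F i).

Lemma adjoin_accessible : accessible_space (adjoin F).
Proof.
apply: closed_set1_accessible => x; rewrite -openC.
apply/adjoin_openP => i /= xi.
case: x xi => [i' _|d _]; first exact: filterS filterT.
by apply: filterS (F_free i d) => d' d'd [/d'd].
Qed.

Lemma adjoin_separated_nbhd {W : I -> set D} {S : set (adjoin F)}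
    {x : adjoin F} {U : set (adjoin F)} :
    (forall i, \forall d \near F i, W i d) ->
    (forall i i' d, i <> i' -> S (inr d) -> W i d -> W i' d -> False) ->
  S x -> open U -> U x ->
  exists K, [/\ open K, open (~` K `|` ~` S), K x & K `<=` U].
Proof.
case: x => [i|d] FW sepW Sx oU Ux; last first.
  exists [set inr d]; split => //; last by move=> _ ->.
  apply/adjoin_openP => i _; apply: filterS (F_free i d) => d' d'd.
  by left => -[/d'd].
pose K (t : adjoin F) := if t is inr d then U (inr d) /\ W i d else t = inl i.
exists K; split => //.
- by apply/adjoin_openP => _ /= [->]; exact: filterI (oU i Ux) (FW i).
- apply/adjoin_openP => i' /= K'i'; have ii' : i' <> i.
    by move=> ii'; subst i'; case: K'i'.
  apply: filterS (FW i') => d W'd /=.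
  have [Sd|] := pselect (S (inr d)); last by right.
  by left => -[_ Wd]; exact: sepW ii' Sd W'd Wd.
- by case=> [_ ->|d []].
Qed.

Lemma adjoin_clopen_nbhd_base {W : I -> set D} :
    (forall i, \forall d \near F i, W i d) ->
    (forall i i' d, i <> i' -> W i d -> W i' d -> False) ->
  clopen_nbhd_base (adjoin F).
Proof.
move=> FW sepW x U oU Ux.
have [K [oK oKS Kx KU]] := adjoin_separated_nbhd (S := setT) FW
  (fun i i' d ii' _ => sepW i i' d ii') Logic.I oU Ux.
rewrite setCT setU0 in oKS.
by exists K; split => //; split => //; rewrite -openC.
Qed.

Lemma adjoin_subspace_clopen_nbhd_base {W : I -> set D} {S : set (adjoin F)} :
    (forall i, \forall d \near F i, W i d) ->
    (forall i i' d, i <> i' -> S (inr d) -> W i d -> W i' d -> False) ->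
  clopen_nbhd_base (set_type S).
Proof.
move=> FW sepW x _ [U oU <-] /= Ux.
have [K [oK oKS Kx KU]] := adjoin_separated_nbhd FW sepW (set_valP x) oU Ux.
exists (set_val @^-1` K); split => //; first exact: clopen_set_type.
by move=> y /KU.
Qed.

End adjoin_theory.

Section collapse.
Context {I D : choiceType} {F : I -> filter_on D}.

Definition collapse (x : adjoin F) : adjoin1 (meet_filter_on F) :=
  if x is inr d then inr d else inl tt.

Lemma collapse_continuous : continuous collapse.
Proof.
by apply/continuousP => U /adjoin_openP oU; apply/adjoin_openP => i /oU; apply.
Qed.

End collapse.

Definition grid : choiceType := (nat * nat)%type.

Definition column_tails : filter_on grid :=
  FilterType (filter_meet (fun i => pair i @ \oo)) _.

Definition graph_tails : filter_on grid :=
  FilterType (filter_meet (fun g : nat -> nat => (fun n => (n, g n)) @ \oo)) _.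

Definition tails (b : bool) : filter_on grid :=
  if b then column_tails else graph_tails.

Lemma tails_free b : free_filter (tails b).
Proof.
move=> [i0 j0]; case: b.
  by move=> i; apply: filterS (nbhs_infty_gt j0) => j + [_ E]; rewrite E ltnn.
by move=> g; apply: filterS (nbhs_infty_gt i0) => n + [E _]; rewrite E ltnn.
Qed.

Lemma tails_meet {U V : set grid} :
  (\forall p \near tails true, U p) -> (\forall p \near tails false, V p) ->
  U `&` V !=set0.
Proof.
move=> Ucols Vgraphs.
have /choice [f Uf] : forall i, exists N, forall j, (N <= j)%N -> U (i, j).
  by move=> i; have [N _ UN] := Ucols i; exists N => j /UN.
have [M _ VM] := Vgraphs f.
by exists (M, f M); split; [exact: Uf | exact: (VM M (leqnn M))].
Qed.

Definition split_fan : topologicalType := adjoin tails.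
Definition fan : topologicalType := adjoin1 (meet_filter_on tails).

Lemma fan_tychonoff : tychonoff_space fan.
Proof.
have meet_free : forall u : unit, free_filter (meet_filter_on tails).
  by move=> _ p b; exact: tails_free.
apply: tychonoff_clopen_base; first exact: adjoin_accessible.
apply: (adjoin_clopen_nbhd_base meet_free (W := fun _ => setT)) => //.
- by move=> _; exact: filterT.
- by move=> [] [].
Qed.

Definition stage : Type := (nat * (nat -> nat))%type.

Definition stage_le (k k' : stage) : Prop :=
  (k.1 <= k'.1)%N /\ forall i, (k.2 i <= k'.2 i)%N.

Definition stage_join (k k' : stage) : stage :=
  (maxn k.1 k'.1, fun i => maxn (k.2 i) (k'.2 i)).

Lemma stage_le_refl k : stage_le k k.
Proof. by split. Qed.

Lemma stage_le_trans k1 k2 k3 :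
  stage_le k1 k2 -> stage_le k2 k3 -> stage_le k1 k3.
Proof.
move=> [le1 le2] [le1' le2']; split => [|i]; first exact: leq_trans le1 le1'.
exact: leq_trans (le2 i) (le2' i).
Qed.

Lemma stage_le_joinl k k' : stage_le k (stage_join k k').
Proof. by split => [|i]; rewrite /= leq_maxl. Qed.

Lemma stage_le_joinr k k' : stage_le k' (stage_join k k').
Proof. by split => [|i]; rewrite /= leq_maxr. Qed.

Lemma stage_directed : directed_poset stage_le.
Proof.
split.
- exact: stage_le_refl.
- exact: stage_le_trans.
- move=> [N g] [N' g'] [/= le1 le2] [/= ge1 ge2].
  congr pair; first by apply/eqP; rewrite eqn_leq le1 ge1.
  by apply: funext => i; apply/eqP; rewrite eqn_leq le2 ge2.
- elim=> [|k s [j ub]]; first by exists (0%N, fun _ => 0%N).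
  exists (stage_join k j) => i /= [<-|/ub ij]; first exact: stage_le_joinl.
  exact: stage_le_trans ij (stage_le_joinr _ _).
Qed.

Definition stage_tail (k : stage) (b : bool) : set grid :=
  if b then [set p | (k.2 p.1 < p.2)%N] else [set p | (k.1 <= p.1)%N].

Lemma near_stage_tail k b : \forall p \near tails b, stage_tail k b p.
Proof.
case: b => [i|g]; first exact: filterS (nbhs_infty_gt (k.2 i)).
exact: filterS (nbhs_infty_ge k.1).
Qed.

Lemma stage_tail_anti {k k'} b :
  stage_le k k' -> stage_tail k' b `<=` stage_tail k b.
Proof.
move=> [le1 le2] [i j]; case: b => /=; first exact: leq_ltn_trans (le2 i).
exact: leq_trans.
Qed.

Definition stage_set (k : stage) : set split_fan :=
  fun t => if t is inr p then ~ (stage_tail k true p /\ stage_tail k false p)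
           else True.

Lemma stage_set_mono {k k'} : stage_le k k' -> stage_set k `<=` stage_set k'.
Proof.
move=> kk' [//|p] /= nk [k1 k2]; apply: nk; split.
- exact: (stage_tail_anti true kk' _ k1).
- exact: (stage_tail_anti false kk' _ k2).
Qed.

Definition Z (k : stage) : topologicalType := set_type (stage_set k).

Lemma Z_tychonoff k : tychonoff_space (Z k).
Proof.
apply: tychonoff_clopen_base.
  exact/set_type_accessible/adjoin_accessible/tails_free.
apply: (adjoin_subspace_clopen_nbhd_base (@tails_free) (near_stage_tail k)).
by move=> [] [] // p _ nk t t'; apply: nk; split.
Qed.

Definition limit_pt (k : stage) (b : bool) : Z k := exist _ (inl b) (mem_set I).

(* The default point is only used when [k'] is not above [k]. *)
Definition z (k k' : stage) : Z k -> Z k' :=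
  fun x => insubd (limit_pt k' true) (set_val x).

Lemma val_z k k' (x : Z k) : stage_le k k' -> set_val (z k k' x) = set_val x.
Proof.
move=> kk'; rewrite /z set_valE val_insubd.
by rewrite (mem_set (stage_set_mono kk' _ (set_valP x))).
Qed.

Lemma z_embedding k k' : stage_le k k' -> embedding (z k k').
Proof. by move=> kk'; apply: embedding_set_type => x; exact: val_z. Qed.

Lemma z_id k : z k k = id.
Proof.
apply: funext => x; apply: val_inj.
by rewrite -set_valE val_z //; exact: stage_le_refl.
Qed.

Lemma z_comp k1 k2 k3 :
  stage_le k1 k2 -> stage_le k2 k3 -> z k2 k3 \o z k1 k2 = z k1 k3.
Proof.
move=> le12 le23; apply: funext => x; apply: val_inj => /=.
by rewrite -!set_valE !val_z //; exact: stage_le_trans le12 le23.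
Qed.

Definition c (k : stage) : Z k -> fan := collapse \o set_val.

Lemma c_continuous k : continuous (c k).
Proof.
move=> x; apply: continuous_comp; last exact: collapse_continuous.
exact: initial_continuous.
Qed.

Lemma c_comp k k' : stage_le k k' -> c k' \o z k k' = c k.
Proof. by move=> kk'; apply: funext => x; rewrite /c /= val_z. Qed.

Definition stage_of (t : split_fan) : stage :=
  if t is inr p then (p.1.+1, fun _ => 0%N) else (0%N, fun _ => 0%N).

Lemma stage_of_mem t : stage_set (stage_of t) t.
Proof. by case: t => // -[i j] /= [_]; rewrite ltnn. Qed.

Definition stage_pt (t : split_fan) : Z (stage_of t) :=
  exist _ t (mem_set (stage_of_mem t)).

Definition lift (l : fan) : split_fan := if l is inr p then inr p else inl true.

Lemma liftK : cancel lift collapse.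
Proof. by case=> [[]|]. Qed.

Section colimit.
Variables (Y : topologicalType) (d : forall k, Z k -> Y).
Hypotheses (d_continuous : forall k, continuous (d k))
  (d_comp : forall k k', stage_le k k' -> d k' \o z k k' = d k).

Definition glue (t : split_fan) : Y := d _ (stage_pt t).

Lemma d_glue k (x : Z k) : d k x = glue (set_val x).
Proof.
pose k' := stage_join k (stage_of (set_val x)).
have kk' : stage_le k k' by exact: stage_le_joinl.
have xk' : stage_le (stage_of (set_val x)) k' by exact: stage_le_joinr.
rewrite /glue -(d_comp _ _ kk') -(d_comp _ _ xk') /=.
by congr (d k' _); apply: val_inj; rewrite -!set_valE !val_z.
Qed.

Lemma glue_preimage k {P : set Y} : open P ->
  exists2 V : set split_fan, open V &
    forall t, stage_set k t -> V t <-> P (glue t).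
Proof.
move=> oP; have [V oV VdP] := proj1 (continuousP _) (d_continuous k) P oP.
exists V => // t kt.
have := congr1 (fun A => A (exist _ t (mem_set kt) : Z k)) VdP.
by rewrite /= d_glue => ->.
Qed.

Lemma glue_tails {b} {P : set Y} : open P -> P (glue (inl b)) ->
  \forall p \near tails b, P (glue (inr p)).
Proof.
move=> oP Pb.
have near_glue k :
    \forall p \near tails b, stage_set k (inr p) -> P (glue (inr p)).
  have [V /adjoin_openP oV VP] := glue_preimage k oP.
  apply: filterS (oV b (proj2 (VP (inl b) Logic.I) Pb)) => p Vp kp.
  exact/(VP _ kp).
(* Column [i] lies in the stage [(i.+1, 0)], the graph of [g] in [(0, g)]. *)
case: b {Pb} near_glue => near_glue.
  move=> i; have := near_glue (i.+1, fun _ => 0%N) i.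
  by apply: (@filterS _ \oo) => j; apply => /= -[_]; rewrite ltnn.
move=> g; have := near_glue (0%N, g) g.
by apply: (@filterS _ \oo) => n; apply => /= -[]; rewrite ltnn.
Qed.

Lemma glue_limits_eq (Y_T2 : hausdorff_space Y) :
  glue (inl true) = glue (inl false).
Proof.
apply: Y_T2 => P Q; rewrite !nbhsE => -[P' [oP' P'a] P'P] [Q' [oQ' Q'b] Q'Q].
have [p [P'p Q'p]] := tails_meet (glue_tails oP' P'a) (glue_tails oQ' Q'b).
by exists (glue (inr p)); split; [exact: P'P | exact: Q'Q].
Qed.

Lemma glue_collapse {u : fan -> Y} :
  (forall k, u \o c k = d k) -> forall t, u (collapse t) = glue t.
Proof. by move=> ucd t; rewrite /glue -(ucd (stage_of t)). Qed.

Lemma colimit_universal (Y_T2 : hausdorff_space Y) :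
  exists! u : fan -> Y, continuous u /\ forall k, u \o c k = d k.
Proof.
exists (glue \o lift); split; first split.
- apply/continuousP => P oP; apply/adjoin_openP => -[] /= Pa b.
  by apply: glue_tails oP _; case: b; rewrite -?(glue_limits_eq Y_T2).
- move=> k; apply: funext => x; rewrite /= d_glue /c /=.
  by case: (set_val x) => [[]|p] //=; rewrite (glue_limits_eq Y_T2).
- move=> u [_ ucd]; apply: funext => l /=.
  by rewrite -(glue_collapse ucd) liftK.
Qed.

End colimit.

Section fan_diagram.
Variable C : topologicalType -> Prop.
Hypotheses (C_hausdorff : forall X, C X -> hausdorff_space X)
  (C_tychonoff : forall X, tychonoff_space X -> C X).

Lemma fan_embedding_diagram : embedding_diagram C stage_le z.
Proof.
split.
- exact: stage_directed.
- by move=> k; apply: C_tychonoff; exact: Z_tychonoff.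
- exact: z_embedding.
- exact: z_id.
- exact: z_comp.
Qed.

Lemma fan_colimit : is_colimit C stage_le z c.
Proof.
split.
- exact/C_tychonoff/fan_tychonoff.
- exact: c_continuous.
- exact: c_comp.
- move=> Y CY d d_cont d_comp.
  exact: colimit_universal Y d d_cont d_comp (C_hausdorff Y CY).
Qed.

Lemma inhabited_not_fg_wrt_embeddings (X : topologicalType) :
  inhabited X -> ~ fg_wrt_embeddings C X.
Proof.
move=> [x0] fgX; pose k0 : stage := (0%N, fun _ => 0%N).
have [_ ess_unique] := fgX _ _ _ _ _ _ fan_embedding_diagram fan_colimit
  (fun _ => inl tt) (@cst_continuous _ _ _).
have [k [_ /(congr1 (fun f => set_val (f x0)))]] :=
  ess_unique k0 (fun _ => limit_pt k0 true) (fun _ => limit_pt k0 false)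
    (@cst_continuous _ _ _) (@cst_continuous _ _ _) erefl erefl.
by rewrite /= !val_z.
Qed.

End fan_diagram.

Lemma empty_fg_wrt_embeddings (C : topologicalType -> Prop)
    (X : topologicalType) :
  ~ inhabited X -> fg_wrt_embeddings C X.
Proof.
move=> X0 I le Zs zs L cs [[refl _ _ ub] _ _ _ _] _ f _; split.
  have [i _] := ub [::]; exists i, (fun x => False_rect _ (X0 (inhabits x))).
  by split; [move=> x | apply: funext => x]; case: X0; exists.
move=> i g g' _ _ _ _; exists i; split => //.
by apply: funext => x; case: X0; exists.
Qed.

Theorem corollary4p4 (C : topologicalType -> Prop) :
  reflective C ->
  (forall X : topologicalType, C X -> hausdorff_space X) ->
  (forall X : topologicalType, tychonoff_space X -> C X) ->
  (exists X : topologicalType, C X /\ ~ inhabited X) /\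
  (forall X : topologicalType, C X ->
     (fg_wrt_embeddings C X <-> ~ inhabited X)).
Proof.
move=> _ C_hausdorff C_tychonoff; split.
  have empty : ~ inhabited (set_type (@set0 fan)) by case=> -[x /set_mem].
  exists (set_type (@set0 fan)); split => //.
  exact/C_tychonoff/empty_tychonoff.
move=> X _; split; last exact: empty_fg_wrt_embeddings.
by move=> fgX X0; exact: inhabited_not_fg_wrt_embeddings X0 fgX.
Qed.
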